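(* Let $M$ be a binary matroid with set of bases $\mathcal{B}$, and let $\mathcal{B}_1\subseteq\mathcal{B}$ be the set of bases of some matroid $M_1$ (on the same ground set). If there is $X\in\mathcal{B}_1$ such that every vertex adjacent to $X$ in $G(M)$ lies in $\mathcal{B}_1$, then $\mathcal{B}_1=\mathcal{B}$.
   Context: A matroid is binary if it is representable over $\mathbb{F}_2$. The base graph $G(M)$ has the bases of $M$ as vertices, two bases being adjacent iff their symmetric difference has exactly two elements. *)

From HB Require Import structures.
From mathcomp Require Import all_boot all_order all_algebra all_fingroup all_field.
Set Implicit Arguments. Unset Strict Implicit. Unset Printing Implicit Defensive.
Import GRing.Theory.
Local Open Scope ring_scope.

Definition matroid_bases (E : finType) (B : {set {set E}}) : Prop :=
  B != set0 /\
  forall B1 B2, B1 \in B -> B2 \in B -> forall x, x \in B1 :\: B2 ->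
    exists2 y, y \in B2 :\: B1 & (B1 :\ x) :|: [set y] \in B.

Definition rows_of (E : finType) (r : nat) (v : E -> 'rV['F_2]_r) (X : {set E})
  : 'M['F_2]_(#|X|, r) := \matrix_(i < #|X|) v (enum_val i).

Definition vec_basis (E : finType) (r : nat) (v : E -> 'rV['F_2]_r) (X : {set E}) : bool :=
  (\rank (rows_of v X) == #|X|)%N && (\rank (rows_of v X) == \rank (rows_of v [set: E]))%N.

Definition binary_bases (E : finType) (B : {set {set E}}) : Prop :=
  exists r (v : E -> 'rV['F_2]_r), forall X : {set E}, (X \in B) = vec_basis v X.

Definition base_adj (E : finType) (X Y : {set E}) : bool :=
  #|(X :\: Y) :|: (Y :\: X)| == 2%N.

From HB Require Import structures.
From mathcomp Require Import all_boot all_order all_algebra all_fingroup all_field.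
Set Implicit Arguments. Unset Strict Implicit. Unset Printing Implicit Defensive.
Import GRing.Theory.

(* We show
   that every basis Y of M lies in B1, by induction on the distance #|X \ Y|.
   Distances 0 and 1 are the hypotheses.  For a larger distance, expand the
   elements of X \ Y over Y: by independence of X, two distinct ones x1, x2
   have expansions differing at some y in Y \ X, and over F_2 this means
   that y can be exchanged with one of them, say x, but not with the other,
   x'.  With any y' exchangeable with x', the bases Y - y + x and Y - y' + x'
   are closer to X, hence in B1, and the exchange axiom of B1 applied to x
   returns Y itself, since Y - y + x' is not a basis. *)

Section SetCounting.
Variable T : finType.
Implicit Types (A C : {set T}) (y e : T).

Lemma card_setD_sym A C : #|A| = #|C| -> #|C :\: A| = #|A :\: C|.
Proof.
move=> cardAC; apply/eqP; rewrite -(eqn_add2l #|A :&: C|).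
by rewrite {1}setIC !cardsID cardAC.
Qed.

Lemma base_adj_card1 A C : #|A| = #|C| -> #|A :\: C| = 1 -> base_adj A C.
Proof.
move=> cardAC cardAC1; rewrite /base_adj cardsU (card_setD_sym cardAC) cardAC1.
suff -> : (A :\: C) :&: (C :\: A) = set0 by rewrite cards0.
by apply/setP => t; rewrite !inE; case: (t \in A); case: (t \in C).
Qed.

Lemma card_setD_exchange A C y e : y \notin A -> e \in A :\: C ->
  #|A :\: (C :\ y :|: [set e])|.+1 = #|A :\: C|.
Proof.
move=> yA eAC; rewrite (cardsD1 e (A :\: C)) eAC add1n; congr _.+1.
apply: eq_card => t; rewrite !inE.
have [->|_] := eqVneq t y; first by rewrite (negbTE yA) !andbF.
by case: (t == e); rewrite /= ?orbF ?orbT.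
Qed.

End SetCounting.

Section BasisExchange.
Variables (T : finType) (B : {set {set T}}).

Definition basis_exchange : Prop :=
  forall B1 B2, B1 \in B -> B2 \in B -> forall x, x \in B1 :\: B2 ->
    exists2 y, y \in B2 :\: B1 & (B1 :\ x) :|: [set y] \in B.

Hypothesis exchB : basis_exchange.

(* If Y - y + x and Y - y' + x' are bases but Y - y + x' is not, then exchanging
   x out of the first one towards the second one can only bring back y. *)
Lemma exchange_back (Y : {set T}) x x' y y' :
  x \notin Y -> y \in Y ->
  Y :\ y :|: [set x] \in B -> Y :\ y' :|: [set x'] \in B ->
  Y :\ y :|: [set x'] \notin B -> Y \in B.
Proof.
move=> xY yY ZB WB Y'B.
have xx' : x != x' by apply: contraNneq Y'B => <-.
have xZW : x \in (Y :\ y :|: [set x]) :\: (Y :\ y' :|: [set x']).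
  by rewrite !inE eqxx (negbTE xY) (negbTE xx') !andbF.
have [z zWZ] := exchB ZB WB xZW.
have -> : (Y :\ y :|: [set x]) :\ x = Y :\ y.
  apply/setP => t; rewrite !inE.
  by have [->|] := eqVneq t x; rewrite ?(negbTE xY) ?andbF ?orbF.
have [->|zy] := eqVneq z y; first by rewrite setUC setD1K.
have -> : z = x'.
  move: zWZ; rewrite !inE (negbTE zy) /=.
  by case: (z \in Y) => //=; rewrite andbF /= => /andP[_ /eqP].
by move/negPf: Y'B => ->.
Qed.

End BasisExchange.

Section BinaryVectors.
Variables (E : finType) (r : nat) (v : E -> 'rV['F_2]_r).
Local Open Scope ring_scope.
Implicit Types (S X Y : {set E}) (a d : E -> 'F_2).

Definition comb a S : 'rV['F_2]_r := \sum_(e in S) a e *: v e.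

Definition indep S := forall a, comb a S = 0 -> {in S, forall e, a e = 0}.

Lemma comb_eq_in a d S : {in S, a =1 d} -> comb a S = comb d S.
Proof. by move=> ad; apply: eq_bigr => e /ad ->. Qed.

Lemma comb_eq0 a S : {in S, forall e, a e = 0} -> comb a S = 0.
Proof. by move=> a0; apply: big1 => e /a0 ->; rewrite scale0r. Qed.

Lemma comb_setID a S (A : {set E}) :
  comb a S = comb a (S :&: A) + comb a (S :\: A).
Proof. exact: big_setID. Qed.

Lemma comb_setD1 a S y : y \in S -> comb a S = a y *: v y + comb a (S :\ y).
Proof. exact: big_setD1. Qed.

Lemma combB a d S : comb (fun e => a e - d e) S = comb a S - comb d S.
Proof. by rewrite /comb -sumrB; apply: eq_bigr => e _; rewrite scalerBl. Qed.

Lemma combN a S : comb (fun e => - a e) S = - comb a S.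
Proof. by rewrite /comb -sumrN; apply: eq_bigr => e _; rewrite scaleNr. Qed.

Lemma comb_delta S x : x \in S -> comb (fun e => (e == x)%:R) S = v x.
Proof.
move=> xS; rewrite (comb_setD1 _ xS) eqxx scale1r comb_eq0 ?addr0 // => e.
by rewrite !inE => /andP[/negbTE -> _].
Qed.

Lemma mul_rows_of a S : (\row_i a (enum_val i)) *m rows_of v S = comb a S.
Proof.
rewrite mulmx_sum_row /comb (big_enum_val (fun e => _ *: v e)) /=.
by apply: eq_bigr => i _; rewrite rowK mxE.
Qed.

Lemma row_of_mem S e : e \in S -> (v e <= rows_of v S)%MS.
Proof.
move=> eS; have := row_sub (enum_rank_in eS e) (rows_of v S).
by rewrite rowK enum_rankK_in.
Qed.

Lemma rows_of_subset S S' : S \subset S' -> (rows_of v S <= rows_of v S')%MS.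
Proof.
move=> sSS'; apply/row_subP => i.
by rewrite rowK row_of_mem // (subsetP sSS') ?enum_valP.
Qed.

Lemma comb_sub a S : (comb a S <= rows_of v S)%MS.
Proof. by apply: summx_sub => e eS; apply/scalemx_sub/row_of_mem. Qed.

Lemma submx_comb w S : (w <= rows_of v S)%MS -> exists a, w = comb a S.
Proof.
case/submxP=> D ->; exists (fun e => \sum_(i < #|S| | enum_val i == e) D 0 i).
rewrite -mul_rows_of; congr (_ *m _); apply/rowP => i; rewrite mxE.
rewrite (big_pred1 i) // => j /=.
by apply/eqP/eqP => [/enum_val_inj|->].
Qed.

Lemma vec_basis_indep S : vec_basis v S -> indep S.
Proof.
case/andP=> /eqP rankS _ a aS0 e eS.
have freeS : row_free (rows_of v S) by rewrite /row_free rankS.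
move/eqP: aS0; rewrite -mul_rows_of mulmx_free_eq0 //.
by move/eqP/rowP/(_ (enum_rank_in eS e)); rewrite !mxE enum_rankK_in.
Qed.

Lemma vec_basis_span S e : vec_basis v S -> (v e <= rows_of v S)%MS.
Proof.
case/andP=> _ /eqP rankS.
have [_] := mxrank_leqif_sup (rows_of_subset (subsetT S)).
rewrite rankS eqxx => /esym allS.
exact: submx_trans (row_of_mem (in_setT e)) allS.
Qed.

Lemma vec_basis_coords S e : vec_basis v S -> exists a, v e = comb a S.
Proof. by move=> bS; apply: submx_comb (vec_basis_span e bS). Qed.

Lemma vec_basis_card S : vec_basis v S -> #|S| = \rank (rows_of v [set: E]).
Proof. by case/andP=> /eqP -> /eqP. Qed.

Lemma span_vec_basis S : #|S| = \rank (rows_of v [set: E]) ->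
  (forall e, (v e <= rows_of v S)%MS) -> vec_basis v S.
Proof.
move=> cardS spanS.
have allS : (rows_of v [set: E] <= rows_of v S)%MS.
  by apply/row_subP => i; rewrite rowK.
have rankS : \rank (rows_of v S) = \rank (rows_of v [set: E]).
  by apply/eqP; rewrite eqn_leq !mxrankS // rows_of_subset ?subsetT.
by rewrite /vec_basis rankS cardS !eqxx.
Qed.

(* The only nonzero scalar of F_2 is 1; this is where binarity enters. *)
Lemma F2_nonzero (t : 'F_2) : t != 0 -> t = 1.
Proof. by case: t => [[|[|n]]] // lt2 _; apply: val_inj. Qed.

Lemma exchange_vec_basis Y y e a : vec_basis v Y -> y \in Y -> e \notin Y ->
  v e = comb a Y -> a y = 1 -> vec_basis v (Y :\ y :|: [set e]).
Proof.
move=> bY yY eY ve ay1.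
have YY' : (rows_of v Y <= rows_of v (Y :\ y :|: [set e]))%MS.
  apply/row_subP => i; rewrite rowK.
  have [->|iy] := eqVneq (enum_val i) y; last first.
    by apply: row_of_mem; rewrite !inE iy enum_valP.
  have -> : v y = v e - comb a (Y :\ y).
    by rewrite ve (comb_setD1 _ yY) ay1 scale1r addrK.
  apply: addmx_sub; first by apply: row_of_mem; rewrite !inE eqxx orbT.
  rewrite -scaleN1r; apply/scalemx_sub/(submx_trans (comb_sub _ _)).
  exact/rows_of_subset/subsetUl.
apply: span_vec_basis => [|w]; last exact: submx_trans (vec_basis_span w bY) YY'.
rewrite setUC cardsU1 -(vec_basis_card bY) (cardsD1 y Y) yY !inE.
by rewrite (negbTE eY) andbF.
Qed.

Lemma exchange_vec_basis_coeff Y y e a : y \in Y -> e \notin Y ->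
  v e = comb a Y -> vec_basis v (Y :\ y :|: [set e]) -> a y != 0.
Proof.
move=> yY eY ve /vec_basis_indep indepY'; apply/eqP => ay0.
pose b z := if z == e then -1 else a z.
have eY' : e \notin Y :\ y by rewrite inE (negbTE eY) andbF.
have : comb b (Y :\ y :|: [set e]) = 0.
  rewrite setUC /comb big_setU1 //= {1}/b eqxx -/(comb b (Y :\ y)).
  rewrite (@comb_eq_in _ a); last first.
    by move=> z zY; rewrite /b ifF //; apply: contraNF eY' => /eqP <-.
  by rewrite scaleN1r ve (comb_setD1 _ yY) ay0 scale0r add0r addNr.
move/indepY'/(_ e); rewrite !inE eqxx orbT /b eqxx => /(_ isT) /eqP.
by rewrite oppr_eq0 oner_eq0.
Qed.

Lemma vec_basis_exchange Y y e a : vec_basis v Y -> y \in Y -> e \notin Y ->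
  v e = comb a Y -> vec_basis v (Y :\ y :|: [set e]) = (a y != 0).
Proof.
move=> bY yY eY ve; apply/idP/idP; first exact: exchange_vec_basis_coeff.
by move/F2_nonzero; apply: exchange_vec_basis.
Qed.

(* If X is independent, a combination of X \ Y that is also a combination of Y
   with no weight on Y \ X must be trivial: both live on X :&: Y. *)
Lemma indep_coords_outside X Y d a : indep X ->
  comb d (X :\: Y) = comb a Y -> {in Y :\: X, forall z, a z = 0} ->
  {in X :\: Y, forall e, d e = 0}.
Proof.
move=> indepX dXY aYX e eXY.
pose b z := if z \in Y then - a z else d z.
have bX0 : comb b X = 0.
  rewrite (comb_setID _ _ Y) (@comb_eq_in _ (fun z => - a z)); last first.
    by move=> z; rewrite inE /b => /andP[_ ->].
  rewrite [comb b _](@comb_eq_in _ d); last first.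
    by move=> z; rewrite inE /b => /andP[/negbTE -> _].
  by rewrite combN dXY (comb_setID a Y X) (comb_eq0 aYX) addr0 setIC addNr.
have [eX eY] := setDP eXY.
by have := indepX b bX0 e eX; rewrite /b (negbTE eY).
Qed.

Lemma coords_outside_nonzero X Y x a : indep X -> x \in X :\: Y ->
  v x = comb a Y -> exists2 z, z \in Y :\: X & a z != 0.
Proof.
move=> indepX xXY vx.
have [z /andP[zYX az]|none] := pickP (fun z => (z \in Y :\: X) && (a z != 0)).
  by exists z.
have a0 : {in Y :\: X, forall z, a z = 0}.
  by move=> z zYX; apply/eqP; move: (none z); rewrite zYX => /negbFE.
have := indep_coords_outside (d := fun e => (e == x)%:R) indepX _ a0 xXY.
by rewrite comb_delta // eqxx -vx => /(_ erefl) /eqP; rewrite oner_eq0.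
Qed.

Lemma coords_outside_distinct X Y x1 x2 a1 a2 : indep X ->
  x1 \in X :\: Y -> x2 \in X :\: Y -> x1 != x2 ->
  v x1 = comb a1 Y -> v x2 = comb a2 Y -> exists2 z, z \in Y :\: X & a1 z != a2 z.
Proof.
move=> indepX x1XY x2XY x12 v1 v2.
have [z /andP[zYX az]|none] := pickP (fun z => (z \in Y :\: X) && (a1 z != a2 z)).
  by exists z.
have a0 : {in Y :\: X, forall z, a1 z - a2 z = 0}.
  by move=> z zYX; apply/eqP; rewrite subr_eq0; move: (none z); rewrite zYX => /negbFE.
have := indep_coords_outside
  (d := fun e => (e == x1)%:R - (e == x2)%:R) indepX _ a0 x1XY.
rewrite !combB !comb_delta // -v1 -v2 eqxx (negbTE x12) subr0.
by move=> /(_ erefl) /eqP; rewrite oner_eq0.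
Qed.

Lemma vec_basis_exchange_outside X Y x : vec_basis v X -> vec_basis v Y ->
  x \in X :\: Y -> exists2 y, y \in Y :\: X & vec_basis v (Y :\ y :|: [set x]).
Proof.
move=> bX bY xXY; have [a vx] := vec_basis_coords x bY.
have [y yYX ay] := coords_outside_nonzero (vec_basis_indep bX) xXY vx.
exists y => //; rewrite (vec_basis_exchange bY _ _ vx) //.
  by case/setDP: yYX.
by case/setDP: xXY.
Qed.

Lemma vec_basis_exchange_split X Y x1 x2 : vec_basis v X -> vec_basis v Y ->
  x1 \in X :\: Y -> x2 \in X :\: Y -> x1 != x2 ->
  exists x x' y, [/\ x \in X :\: Y, x' \in X :\: Y, y \in Y :\: X,
    vec_basis v (Y :\ y :|: [set x]) & ~~ vec_basis v (Y :\ y :|: [set x'])].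
Proof.
move=> bX bY x1XY x2XY x12.
have [a1 v1] := vec_basis_coords x1 bY.
have [a2 v2] := vec_basis_coords x2 bY.
have [y yYX a12] :=
  coords_outside_distinct (vec_basis_indep bX) x1XY x2XY x12 v1 v2.
have exch x a : x \in X :\: Y -> v x = comb a Y ->
    vec_basis v (Y :\ y :|: [set x]) = (a y != 0).
  by case/setDP: yYX => yY _ /setDP[_ xY] vx; apply: vec_basis_exchange.
have [a1y0|a1y] := eqVneq (a1 y) 0.
  exists x2, x1, y; rewrite (exch _ _ x1XY v1) (exch _ _ x2XY v2) a1y0 eqxx.
  by split=> //; rewrite -a1y0 eq_sym.
exists x1, x2, y; rewrite (exch _ _ x1XY v1) (exch _ _ x2XY v2) a1y.
split=> //; apply: contra a12 => /F2_nonzero ->.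
by rewrite (F2_nonzero a1y).
Qed.

End BinaryVectors.

Section ReachAllBases.
Variables (E : finType) (r : nat) (v : E -> 'rV['F_2]_r).
Variables (B1 : {set {set E}}) (X : {set E}).
Hypothesis B1_vec : forall Y, Y \in B1 -> vec_basis v Y.
Hypothesis exchB1 : basis_exchange B1.
Hypothesis XB1 : X \in B1.
Hypothesis X_adj : forall Y, vec_basis v Y -> base_adj X Y -> Y \in B1.

Lemma far_vec_basis_in_B1 Y : vec_basis v Y -> 1 < #|X :\: Y| ->
  (forall Y', vec_basis v Y' -> #|X :\: Y'| < #|X :\: Y| -> Y' \in B1) ->
  Y \in B1.
Proof.
move=> bY far closer; have bX := B1_vec XB1.
have [x1 x1XY] : exists x1, x1 \in X :\: Y.
  by apply/set0Pn; rewrite -card_gt0 ltnW.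
have [x2 x2XY'] : exists x2, x2 \in (X :\: Y) :\ x1.
  have := cardsD1 x1 (X :\: Y); rewrite x1XY add1n => cardXY.
  by apply/set0Pn; rewrite -card_gt0 -ltnS -cardXY.
have [x21 x2XY] := setD1P x2XY'.
have [x [x' [y [xXY x'XY yYX bZ nbY']]]] :=
  vec_basis_exchange_split bX bY x2XY x1XY x21.
have [y' y'YX bW] := vec_basis_exchange_outside bX bY x'XY.
have closer_in_B1 z e : z \in Y :\: X -> e \in X :\: Y ->
    vec_basis v (Y :\ z :|: [set e]) -> Y :\ z :|: [set e] \in B1.
  move=> /setDP[_ zX] eXY bZ'; apply: closer bZ' _.
  by rewrite -(card_setD_exchange zX eXY).
apply: (exchange_back exchB1 (x := x) (x' := x') (y := y) (y' := y')).
- by case/setDP: xXY.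
- by case/setDP: yYX.
- exact: closer_in_B1 bZ.
- exact: closer_in_B1 bW.
- by apply: contra nbY' => /B1_vec.
Qed.

Lemma vec_basis_in_B1 Y : vec_basis v Y -> Y \in B1.
Proof.
have bX := B1_vec XB1.
move: {2}#|X :\: Y| (erefl #|X :\: Y|) => n; elim/ltn_ind: n Y => n IH Y dist bY.
have cardXY : #|X| = #|Y| by rewrite (vec_basis_card bX) (vec_basis_card bY).
case: n dist IH => [|[|k]] dist IH.
- suff -> : Y = X by [].
  apply/eqP; rewrite eq_sym eqEcard cardXY leqnn andbT.
  by rewrite -setD_eq0 -cards_eq0 dist.
- exact/X_adj/base_adj_card1.
- apply: far_vec_basis_in_B1 => //; first by rewrite dist.
  by move=> Y' bY' closer; apply: (IH _ _ Y' erefl bY'); rewrite -dist.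
Qed.

End ReachAllBases.

Theorem lemma3 (E : finType) (B B1 : {set {set E}}) :
  matroid_bases B -> binary_bases B ->
  matroid_bases B1 -> B1 \subset B ->
  (exists2 X, X \in B1 & forall Y, Y \in B -> base_adj X Y -> Y \in B1) ->
  B1 = B.
Proof.
move=> _ [r [v Bv]] [_ exchB1] B1B [X XB1 X_adj].
have B1_vec Y : Y \in B1 -> vec_basis v Y by move/(subsetP B1B); rewrite Bv.
apply/eqP; rewrite eqEsubset B1B; apply/subsetP => Y; rewrite Bv.
apply: (vec_basis_in_B1 B1_vec exchB1 XB1) => Z bZ.
by apply: X_adj; rewrite Bv.
Qed.
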